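(* Let $\eta>0$, $\beta\in\mathbb{R}$ and $\gamma\ge\eta$. Let $\widehat{\mathcal{L}}_1,\widehat{\mathcal{L}}_2\in\mathbb{R}^{N\times N}$ satisfy $\langle \widehat{\mathcal{L}}_i\mathbf{x},\mathbf{x}\rangle\le 0$ for all $\mathbf{x}\in\mathbb{R}^N$, $i=1,2$. Define $$\mathcal{P}_{\gamma}:=\left[\eta I-\widehat{\mathcal{L}}_2+\beta^2(\eta I-\widehat{\mathcal{L}}_1)^{-1}\right](\gamma I-\widehat{\mathcal{L}}_2)^{-1}.$$ Then $\|\mathcal{P}_\gamma\|\le 1+\dfrac{\beta^2}{\gamma\eta}$.
   Context: $\langle\cdot,\cdot\rangle$ is the Euclidean inner product on $\mathbb{R}^N$ and $\|\cdot\|$ the induced operator two-norm. The matrices $\eta I-\widehat{\mathcal{L}}_1$ and $\gamma I-\widehat{\mathcal{L}}_2$ are invertible under the stated hypotheses. *)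

From HB Require Import structures.
From mathcomp Require Import all_boot all_order all_algebra.
From mathcomp Require Import all_classical all_reals.
Set Implicit Arguments. Unset Strict Implicit. Unset Printing Implicit Defensive.
Import Order.TTheory GRing.Theory Num.Theory.
Local Open Scope ring_scope.
Local Open Scope classical_set_scope.

Definition inner (R : realType) (N : nat) (x y : 'cV[R]_N) : R := (x^T *m y) 0 0.

Definition enorm (R : realType) (N : nat) (x : 'cV[R]_N) : R := Num.sqrt (inner x x).

Definition opnorm2 (R : realType) (N : nat) (A : 'M[R]_N) : R :=
  sup [set enorm (A *m x) | x in [set x : 'cV[R]_N | enorm x <= 1]].

From HB Require Import structures.
From mathcomp Require Import all_boot all_order all_algebra.
From mathcomp Require Import all_classical all_reals.
From mathcomp Require Import ring lra.
Set Implicit Arguments. Unset Strict Implicit. Unset Printing Implicit Defensive.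
Import Order.TTheory GRing.Theory Num.Theory.
Local Open Scope ring_scope.

(* Idea: for x with ||x|| <= 1 put y = (gamma - L2)^-1 x and
   z = (eta - L1)^-1 y, so that P x = (eta - L2) y + beta^2 z.  Expanding
   ||(c - L) x||^2 = c^2 ||x||^2 - 2c <L x, x> + ||L x||^2 shows that for a
   dissipative L the map c |-> ||(c - L) x|| is nondecreasing on c >= 0 and
   bounded below by c ||x||.  The first fact gives ||(eta - L2) y|| <=
   ||(gamma - L2) y|| = ||x||; the second gives the resolvent bounds
   ||y|| <= ||x|| / gamma and ||z|| <= ||y|| / eta (and the invertibility of
   c - L), and the triangle inequality concludes. *)

Section EuclideanNorm.
Variables (R : realType) (N : nat).
Implicit Types (x y z u v : 'cV[R]_N).

Lemma innerE x y : inner x y = \sum_i x i 0 * y i 0.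
Proof. by rewrite /inner !mxE; apply: eq_bigr => i _; rewrite mxE. Qed.

Lemma innerC x y : inner x y = inner y x.
Proof. by rewrite !innerE; apply: eq_bigr => i _; rewrite mulrC. Qed.

Lemma innerDl x y z : inner (x + y) z = inner x z + inner y z.
Proof. by rewrite !innerE -big_split; apply: eq_bigr => i _; rewrite !mxE mulrDl. Qed.

Lemma innerZl a x y : inner (a *: x) y = a * inner x y.
Proof. by rewrite !innerE mulr_sumr; apply: eq_bigr => i _; rewrite !mxE mulrA. Qed.

Lemma innerNl x y : inner (- x) y = - inner x y.
Proof. by rewrite -scaleN1r innerZl mulN1r. Qed.

Lemma innerDr x y z : inner z (x + y) = inner z x + inner z y.
Proof. by rewrite innerC innerDl !(innerC z). Qed.

Lemma innerZr a x y : inner y (a *: x) = a * inner y x.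
Proof. by rewrite innerC innerZl innerC. Qed.

Lemma innerNr x y : inner y (- x) = - inner y x.
Proof. by rewrite innerC innerNl innerC. Qed.

Lemma inner0l x : inner 0 x = 0.
Proof. by rewrite innerE big1 // => i _; rewrite mxE mul0r. Qed.

Lemma inner_ge0 x : 0 <= inner x x.
Proof. by rewrite innerE; apply: sumr_ge0 => i _; rewrite -expr2 sqr_ge0. Qed.

Lemma inner_eq0 x : inner x x = 0 -> x = 0.
Proof.
rewrite innerE => /eqP; rewrite psumr_eq0 => [/allP H|i _]; last first.
  by rewrite -expr2 sqr_ge0.
apply/matrixP => i j; rewrite (ord1 j) mxE.
by have /(_ (mem_index_enum i)) := H i; rewrite mulf_eq0 orbb => /eqP.
Qed.

Lemma enorm_ge0 x : 0 <= enorm x.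
Proof. exact: sqrtr_ge0. Qed.

Lemma enorm_sq x : enorm x ^+ 2 = inner x x.
Proof. by rewrite sqr_sqrtr // inner_ge0. Qed.

Lemma enorm0 : enorm (0 : 'cV[R]_N) = 0.
Proof. by rewrite /enorm inner0l sqrtr0. Qed.

Lemma enorm_eq0 x : enorm x = 0 -> x = 0.
Proof. by move=> x0; apply: inner_eq0; rewrite -enorm_sq x0 expr0n. Qed.

Lemma enormZ a x : enorm (a *: x) = `|a| * enorm x.
Proof.
by rewrite /enorm innerZl innerZr mulrA -expr2 sqrtrM ?sqr_ge0 // sqrtr_sqr.
Qed.

Lemma enorm_le x y : inner x x <= inner y y -> enorm x <= enorm y.
Proof. by move=> h; rewrite /enorm ler_sqrt // inner_ge0. Qed.

Lemma cauchy_schwarz u v : inner u v <= enorm u * enorm v.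
Proof.
have [/enorm_eq0 ->|un0] := eqVneq (enorm u) 0; first by rewrite inner0l enorm0 mul0r.
have [/enorm_eq0 ->|vn0] := eqVneq (enorm v) 0.
  by rewrite innerC inner0l enorm0 mulr0.
have ha : 0 < enorm u by rewrite lt_def un0 enorm_ge0.
have hb : 0 < enorm v by rewrite lt_def vn0 enorm_ge0.
(* 0 <= ||b u - a v||^2 = 2ab (ab - <u, v>) with a = ||u||, b = ||v||. *)
have := inner_ge0 (enorm v *: u - enorm u *: v).
rewrite !(innerDl, innerDr, innerZl, innerZr, innerNl, innerNr) (innerC v u).
rewrite -!enorm_sq => H.
have hab : 0 < enorm u * enorm v by rewrite mulr_gt0.
nra.
Qed.

Lemma enorm_triangle u v : enorm (u + v) <= enorm u + enorm v.
Proof.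
have h := enorm_sq (u + v).
rewrite !(innerDl, innerDr) (innerC v u) -!enorm_sq in h.
have := cauchy_schwarz u v.
have := enorm_ge0 u; have := enorm_ge0 v; have := enorm_ge0 (u + v).
nra.
Qed.

End EuclideanNorm.

Definition dissipative {R : realType} {N : nat} (L : 'M[R]_N) : Prop :=
  forall x : 'cV[R]_N, inner (L *m x) x <= 0.

Section DissipativeShift.
Variables (R : realType) (N : nat) (L : 'M[R]_N).
Hypothesis hL : dissipative L.
Implicit Types (x : 'cV[R]_N) (c d : R).

Lemma shift_inner c x :
  inner ((c%:M - L) *m x) ((c%:M - L) *m x) =
  c ^+ 2 * inner x x - 2 * c * inner (L *m x) x + inner (L *m x) (L *m x).
Proof.
rewrite mulmxBl mul_scalar_mx.
rewrite !(innerDl, innerDr, innerZl, innerZr, innerNl, innerNr) (innerC x (L *m x)).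
ring.
Qed.

Lemma shift_coercive c x : 0 <= c -> c * enorm x <= enorm ((c%:M - L) *m x).
Proof.
move=> c0; rewrite -{1}(ger0_norm c0) -enormZ; apply: enorm_le.
rewrite innerZl innerZr mulrA -expr2 shift_inner.
have := hL x; have := inner_ge0 (L *m x); nra.
Qed.

Lemma shift_mono d c x : 0 <= d -> d <= c ->
  enorm ((d%:M - L) *m x) <= enorm ((c%:M - L) *m x).
Proof.
move=> d0 dc; apply: enorm_le; rewrite !shift_inner.
have := hL x; have := inner_ge0 x => ha hb.
have h1 : 0 <= (c - d) * (c + d) * inner x x.
  by rewrite !mulr_ge0 // ?subr_ge0 // addr_ge0 // (le_trans d0).
have h2 : 0 <= (c - d) * - inner (L *m x) x.
  by rewrite mulr_ge0 // ?subr_ge0 // oppr_ge0.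
nra.
Qed.

(* For c > 0 coercivity makes c - L injective, hence invertible. *)
Lemma shift_unit c : 0 < c -> c%:M - L \in unitmx.
Proof.
move=> c0; rewrite unitmxE -det_tr unitfE; apply/negP => /det0P [v vn0 hv].
have hker : (c%:M - L) *m v^T = 0 by rewrite -[LHS]trmxK trmx_mul trmxK hv trmx0.
have := shift_coercive v^T (ltW c0); rewrite hker enorm0 => hle.
have : enorm v^T = 0.
  apply/eqP; rewrite eq_le enorm_ge0 andbT -(pmulr_rle0 _ c0); exact: hle.
by move/enorm_eq0/(congr1 trmx); rewrite trmxK trmx0 => v0; rewrite v0 eqxx in vn0.
Qed.

Lemma resolvent_bound c x : 0 < c -> c * enorm (invmx (c%:M - L) *m x) <= enorm x.
Proof.
move=> c0; have := shift_coercive (invmx (c%:M - L) *m x) (ltW c0).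
by rewrite mulmxA mulmxV ?shift_unit // mul1mx.
Qed.

End DissipativeShift.

Lemma opnorm2_le (R : realType) (N : nat) (A : 'M[R]_N) (b : R) :
  (forall x : 'cV[R]_N, enorm x <= 1 -> enorm (A *m x) <= b) -> opnorm2 A <= b.
Proof.
move=> hA; apply: ge_sup; last by move=> r [x /= hx <-]; exact: hA.
by exists (enorm (A *m 0)), 0 => //=; rewrite enorm0.
Qed.

Theorem mainTheorem2 (R : realType) (N : nat) (eta beta gamma : R)
  (L1 L2 : 'M[R]_N)
  (heta : 0 < eta) (hgamma : eta <= gamma)
  (hL1 : forall x : 'cV[R]_N, inner (L1 *m x) x <= 0)
  (hL2 : forall x : 'cV[R]_N, inner (L2 *m x) x <= 0) :
  opnorm2 (((eta%:M - L2) + beta ^+ 2 *: invmx (eta%:M - L1))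
            *m invmx (gamma%:M - L2))
  <= 1 + beta ^+ 2 / (gamma * eta).
Proof.
have hg : 0 < gamma := lt_le_trans heta hgamma.
apply: opnorm2_le => x hx.
set y := invmx (gamma%:M - L2) *m x; set z := invmx (eta%:M - L1) *m y.
have -> : (eta%:M - L2 + beta ^+ 2 *: invmx (eta%:M - L1)) *m
            invmx (gamma%:M - L2) *m x = (eta%:M - L2) *m y + beta ^+ 2 *: z.
  by rewrite -mulmxA mulmxDl -scalemxAl.
have hy : enorm ((eta%:M - L2) *m y) <= 1.
  have hCy : (gamma%:M - L2) *m y = x by rewrite mulmxA mulmxV ?shift_unit ?mul1mx.
  by rewrite (le_trans (shift_mono hL2 y (ltW heta) hgamma)) // hCy.
have hz : enorm z <= (gamma * eta)^-1.
  rewrite -[_^-1]mulr1 ler_pdivlMl ?mulr_gt0 // -mulrA.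
  apply: le_trans hx; apply: le_trans (resolvent_bound hL2 x hg).
  by apply: ler_wpM2l; [exact: ltW | exact: resolvent_bound].
apply: (le_trans (enorm_triangle _ _)); rewrite enormZ ger0_norm ?sqr_ge0 //.
by apply: lerD => //; apply: ler_wpM2l; rewrite ?sqr_ge0.
Qed.
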